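(* Let $F$ be a field of characteristic $p>0$, let $S\subset F$ be nonempty with $\mathrm{pdeg}(S)=k$ finite, and let $\{a_1,\ldots,a_k\}$ be a $p$-basis of $F^p(S)$. For $r\in\{1,\ldots,k\}$ put $t=k-r+1$. Then $$\operatorname{ann}\Omega^n_F\Big(\textstyle\bigwedge^r\mathrm{d} S\Big)=\sum_{\substack{\{i_1,\ldots,i_t\}\subset\{1,\ldots,k\}\\ i_1<\cdots<i_t}}\mathrm{d} a_{i_1}\wedge\cdots\wedge\mathrm{d} a_{i_t}\wedge\Omega^{n-t}(F),$$ and for $r>k$ we have $\operatorname{ann}\Omega^n_F(\bigwedge^r\mathrm{d} S)=\Omega^n(F)$.
   Context: $F$ is a field of characteristic $p>0$. $\Omega^1(F)$ is the $F$-vector space generated by symbols $\mathrm{d} a$ ($a\in F$) with $\mathrm{d}(a+b)=\mathrm{d} a+\mathrm{d} b$, $\mathrm{d}(ab)=a\,\mathrm{d} b+b\,\mathrm{d} a$; $\Omega^n(F)=\bigwedge^n_F\Omega^1(F)$ for $n\geq1$, $\Omega^0(F)=F$, $\Omega^n(F)=0$ for $n<0$. A subset $A\subset F$ is $p$-independent if $[F^p(a_1,\ldots,a_m):F^p]=p^m$ for all finite $\{a_1,\ldots,a_m\}\subset A$; for $C\subset F$, $\mathrm{pdeg}(C)=\log_p[F^p(C):F^p]$; a $p$-basis of a field $L$ with $F^p\subseteq L\subseteq F$ is a $p$-independent $A\subset L$ with $F^p(A)=L$. For nonempty $S\subset F$, $\bigwedge^r\mathrm{d} S=\{\mathrm{d}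 s_1\wedge\cdots\wedge\mathrm{d} s_r\mid s_i\in S\}\subset\Omega^r(F)$. For nonempty $U\subset\Omega^r(F)$, $\operatorname{ann}\Omega^n_F(U)=\{\omega\in\Omega^n(F)\mid\omega\wedge u=0\text{ for all }u\in U\}$. *)

From HB Require Import structures.
From mathcomp Require Import all_boot all_order all_algebra.
From mathcomp Require Import freeg.
Set Implicit Arguments. Unset Strict Implicit. Unset Printing Implicit Defensive.
Import Order.TTheory GRing.Theory Num.Theory.
Local Open Scope ring_scope.

Section Omega.
Variable F : fieldType.

(** Formal F-linear combinations of symbols  dx_1 /\ ... /\ dx_m  (one symbol
    for every finite sequence [x_1;...;x_m] of elements of F, all degrees
    together). *)
Definition Form := {freeg (seq F) / F}.

Definition dw (s : seq F) : Form := << s >>.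

(** Defining relations of the graded exterior algebra  /\^* Omega^1(F):
    additivity and Leibniz rule of d in each slot, and alternation. *)
Inductive Gen : Form -> Prop :=
| gen_add (xs : seq F) (i : nat) (a b : F) : (i < size xs)%N ->
    Gen (dw (set_nth 0 xs i (a + b)) - dw (set_nth 0 xs i a)
         - dw (set_nth 0 xs i b))
| gen_leib (xs : seq F) (i : nat) (a b : F) : (i < size xs)%N ->
    Gen (dw (set_nth 0 xs i (a * b)) - a *: dw (set_nth 0 xs i b)
         - b *: dw (set_nth 0 xs i a))
| gen_alt (xs : seq F) (i j : nat) : (i < j)%N -> (j < size xs)%N ->
    nth 0 xs i = nth 0 xs j -> Gen (dw xs).

(** the F-submodule generated by the relations: [Zero w] means that the
    class of w in /\^* Omega^1(F) is 0. *)
Inductive Zero : Form -> Prop :=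
| zero_gen w : Gen w -> Zero w
| zero_0 : Zero 0
| zero_add w w' : Zero w -> Zero w' -> Zero (w + w')
| zero_scale (c : F) w : Zero w -> Zero (c *: w).

(** w represents an element of Omega^n(F) (n : nat) *)
Definition homog (n : nat) (w : Form) : Prop :=
  forall s, s \in dom w -> size s = n.

Definition OmegaZ (m : int) (w : Form) : Prop :=
  match m with
  | Posz n => homog n w
  | Negz _ => w = 0
  end.

Definition wedge (w v : Form) : Form :=
  fglift (fun s => fglift (fun t => dw (s ++ t)) v) w.

(** ann_{Omega^n}(/\^r dS) membership of (the class of) w, for w of degree n *)
Definition annihilates (S : F -> Prop) (r : nat) (w : Form) : Prop :=
  forall s : seq F, size s = r -> (forall x, x \in s -> S x) ->
    Zero (wedge w (dw s)).

Variable p : nat.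

Definition Fp (x : F) : Prop := exists y, x = y ^+ p.

Definition subfield_closed (L : F -> Prop) : Prop :=
  [/\ L 0, L 1, (forall x y, L x -> L y -> L (x + y)),
      (forall x, L x -> L (- x)) &
      (forall x y, L x -> L y -> L (x * y)) /\ (forall x, L x -> L (x^-1))].

Definition adjoin (C : F -> Prop) (x : F) : Prop :=
  forall L : F -> Prop, subfield_closed L -> (forall y, Fp y -> L y) ->
    (forall c, C c -> L c) -> L x.

Definition ext_degree (K L : F -> Prop) (d : nat) : Prop :=
  exists b : seq F, [/\ size b = d, (forall x, x \in b -> L x),
    (forall c : seq F, size c = size b -> (forall x, x \in c -> K x) ->
       \sum_(i < size b) c`_i * b`_i = 0 -> forall i, c`_i = 0)
  & (forall x, L x -> exists c : seq F, [/\ size c = size b,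
        (forall y, y \in c -> K y) & x = \sum_(i < size b) c`_i * b`_i])].

Definition pdeg_eq (C : F -> Prop) (k : nat) : Prop :=
  ext_degree Fp (adjoin C) (p ^ k).

Definition p_independent (A : F -> Prop) : Prop :=
  forall s : seq F, uniq s -> (forall x, x \in s -> A x) ->
    ext_degree Fp (adjoin (fun x => x \in s)) (p ^ size s).

Definition p_basis (L A : F -> Prop) : Prop :=
  [/\ (forall x, A x -> L x), p_independent A
    & (forall x, adjoin A x <-> L x)].

End Omega.

(* Choose derivations D_1, ..., D_k of F vanishing on F^p with D_j(a_i) = delta_ij:
   a_j is not in F^p(a_i : i <> j), and a derivation of a subfield L containing F^p
   extends to L(x) for any x outside L, with any value at x, because X^p - x^p is the
   minimal polynomial of x over L and has zero derivative; Zorn's lemma then gives a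
   derivation of F.  The contraction i_j with D_j is an antiderivation of Omega(F)
   with i_j(da_i) = delta_ij, and w = da_j /\ i_j w + i_j (da_j /\ w); inducting on j,
   a form w with w /\ da_l1 /\ ... /\ da_lr = 0 for all l is a sum of terms
   da_I /\ eta_I with |I| = k - r + 1.  As dS and the da_i span the same F-space, these
   are exactly the forms annihilating /\^r dS; conversely da_I /\ ds_1 /\ ... /\ ds_r
   expands into wedges of k + 1 of the k differentials da_i, which all vanish. *)

From HB Require Import structures.
From mathcomp Require Import all_boot all_order all_algebra.
From mathcomp Require Import freeg.
From mathcomp Require Import ring zify.
From mathcomp Require boolp classical_sets.
Import Order.TTheory GRing.Theory Num.Theory.
Local Open Scope ring_scope.

Set Implicit Arguments.
Unset Strict Implicit.
Unset Printing Implicit Defensive.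

(** * Formal forms and the wedge product *)

Section FreeForms.
Variable F : fieldType.
Local Notation form := (Form F).
Implicit Types (w v u : form) (s t q pre post mid : seq F) (x y : F).

HB.instance Definition _ (M : lmodType F) (f : seq F -> M) :=
  GRing.isAdditive.Build form M (fglift f) (lift_is_additive f).

Lemma dwZ c s : << c *g s >> = c *: dw s.
Proof. by apply/eqP/freeg_eqP => z; rewrite coeffZ !coeffU mul1r. Qed.

Lemma formE w : w = \sum_(z <- dom w) coeff z w *: dw z.
Proof. by rewrite -{1}(freeg_sumE w); apply: eq_bigr => z _; rewrite dwZ. Qed.

Lemma form_ind (P : form -> Prop) :
  P 0 -> (forall w v, P w -> P v -> P (w + v)) ->
  (forall c s, P (c *: dw s)) -> forall w, P w.
Proof.
move=> P0 PD PZ w; rewrite (formE w).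
by elim: (dom w) => [|z r IH]; rewrite ?big_nil ?big_cons //; apply: PD.
Qed.

Section Lift.
Variable M : lmodType F.
Implicit Types f g : seq F -> M.

Lemma fgliftE f w : fglift f w = \sum_(z <- dom w) coeff z w *: f z.
Proof.
rewrite -{1}(freeg_sumE w) raddf_sum; apply: eq_bigr => z _.
exact: liftU.
Qed.

Lemma fglift_dw f s : fglift f (dw s) = f s.
Proof. by rewrite /dw liftU scale1r. Qed.

Lemma fgliftZ f c w : fglift f (c *: w) = c *: fglift f w.
Proof.
rewrite {1}(formE w) scaler_sumr raddf_sum /= fgliftE scaler_sumr.
by apply: eq_bigr => z _; rewrite scalerA -dwZ liftU scalerA.
Qed.

Lemma eq_fglift f g : f =1 g -> fglift f =1 fglift g.
Proof. by move=> e w; rewrite !fgliftE; apply: eq_bigr => z _; rewrite e. Qed.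

Lemma fglift_addf f g w :
  fglift (fun s => f s + g s) w = fglift f w + fglift g w.
Proof. by rewrite !fgliftE -big_split; apply: eq_bigr => z _; rewrite scalerDr. Qed.

Lemma fglift_scalef f c w : fglift (fun s => c *: f s) w = c *: fglift f w.
Proof.
by rewrite !fgliftE scaler_sumr; apply: eq_bigr => z _; rewrite !scalerA mulrC.
Qed.

Lemma fglift_oppf f w : fglift (fun s => - f s) w = - fglift f w.
Proof.
by rewrite -scaleN1r -fglift_scalef; apply: eq_fglift => s; rewrite scaleN1r.
Qed.

Lemma fglift_subf f g w :
  fglift (fun s => f s - g s) w = fglift f w - fglift g w.
Proof. by rewrite fglift_addf fglift_oppf. Qed.

End Lift.

Lemma wedge_dw s t : wedge (dw s) (dw t) = dw (s ++ t).
Proof. by rewrite /wedge !fglift_dw. Qed.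

Lemma wedge_dwl s w : wedge (dw s) w = fglift (fun t => dw (s ++ t)) w.
Proof. by rewrite /wedge fglift_dw. Qed.

Lemma wedgeDl w1 w2 v : wedge (w1 + w2) v = wedge w1 v + wedge w2 v.
Proof. by rewrite /wedge raddfD. Qed.

Lemma wedgeZl c w v : wedge (c *: w) v = c *: wedge w v.
Proof. by rewrite /wedge fgliftZ. Qed.

Lemma wedge0l v : wedge 0 v = 0.
Proof. by rewrite /wedge raddf0. Qed.

Lemma wedgeNl w v : wedge (- w) v = - wedge w v.
Proof. by rewrite -scaleN1r wedgeZl scaleN1r. Qed.

Lemma wedgeBl w1 w2 v : wedge (w1 - w2) v = wedge w1 v - wedge w2 v.
Proof. by rewrite wedgeDl wedgeNl. Qed.

Lemma wedgeDr w v1 v2 : wedge w (v1 + v2) = wedge w v1 + wedge w v2.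
Proof. by rewrite /wedge -fglift_addf; apply: eq_fglift => s; rewrite raddfD. Qed.

Lemma wedgeZr c w v : wedge w (c *: v) = c *: wedge w v.
Proof. by rewrite /wedge -fglift_scalef; apply: eq_fglift => s; rewrite fgliftZ. Qed.

Lemma wedge0r w : wedge w 0 = 0.
Proof. by have := wedgeZr 0 w 0; rewrite !scale0r. Qed.

Lemma wedgeNr w v : wedge w (- v) = - wedge w v.
Proof. by rewrite -scaleN1r wedgeZr scaleN1r. Qed.

Lemma wedgeBr w v1 v2 : wedge w (v1 - v2) = wedge w v1 - wedge w v2.
Proof. by rewrite wedgeDr wedgeNr. Qed.

Lemma wedge_suml I (r : seq I) (P : pred I) (G : I -> form) v :
  wedge (\sum_(i <- r | P i) G i) v = \sum_(i <- r | P i) wedge (G i) v.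
Proof.
elim: r => [|i r IH]; rewrite ?big_nil ?wedge0l // !big_cons.
by case: (P i); rewrite ?wedgeDl IH.
Qed.

Lemma wedge_sumr I (r : seq I) (P : pred I) w (G : I -> form) :
  wedge w (\sum_(i <- r | P i) G i) = \sum_(i <- r | P i) wedge w (G i).
Proof.
elim: r => [|i r IH]; rewrite ?big_nil ?wedge0r // !big_cons.
by case: (P i); rewrite ?wedgeDr IH.
Qed.

Lemma wedgeA u v w : wedge (wedge u v) w = wedge u (wedge v w).
Proof.
elim/form_ind: u => [|u1 u2 I1 I2|c s]; first by rewrite !wedge0l.
  by rewrite !wedgeDl I1 I2.
rewrite !wedgeZl; congr (_ *: _).
elim/form_ind: v => [|v1 v2 I1 I2|c' t]; first by rewrite wedge0r !wedge0l wedge0r.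
  by rewrite wedgeDr !wedgeDl wedgeDr I1 I2.
rewrite wedgeZr !wedgeZl wedgeZr; congr (_ *: _).
elim/form_ind: w => [|w1 w2 I1 I2|c'' e]; first by rewrite !wedge0r.
  by rewrite !wedgeDr I1 I2.
by rewrite !wedgeZr !wedge_dw catA.
Qed.

Lemma wedge_nil w : wedge (dw [::]) w = w.
Proof.
elim/form_ind: w => [|w v I1 I2|c s]; first by rewrite wedge0r.
  by rewrite wedgeDr I1 I2.
by rewrite wedgeZr wedge_dw.
Qed.

End FreeForms.

(** * Relations of the exterior algebra *)

Section Relations.
Variable F : fieldType.
Local Notation form := (Form F).
Implicit Types (w v u : form) (s t q pre post mid : seq F) (x y : F).

Lemma ZeroN w : Zero w -> Zero (- w).
Proof. by rewrite -scaleN1r; apply: zero_scale. Qed.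

Lemma ZeroB w v : Zero w -> Zero v -> Zero (w - v).
Proof. by move=> Zw Zv; apply: zero_add => //; apply: ZeroN. Qed.

Lemma Zero_sum I (r : seq I) (P : pred I) (G : I -> form) :
  (forall i, P i -> Zero (G i)) -> Zero (\sum_(i <- r | P i) G i).
Proof. by move=> ZG; apply: big_ind => //; [exact: zero_0 | exact: zero_add]. Qed.

Lemma Zero_fglift_all (g : seq F -> form) w :
  (forall s, Zero (g s)) -> Zero (fglift g w).
Proof. by move=> Zg; rewrite fgliftE; apply: Zero_sum => z _; apply: zero_scale. Qed.

Definition eqv w v := Zero (w - v).

Lemma eqv_refl w : eqv w w.
Proof. by rewrite /eqv subrr; exact: zero_0. Qed.

Lemma eqv_sym w v : eqv w v -> eqv v w.
Proof. by move=> e; rewrite /eqv -opprB; apply: ZeroN. Qed.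

Lemma eqv_trans w v u : eqv w v -> eqv v u -> eqv w u.
Proof. by move=> e1 e2; have := zero_add e1 e2; rewrite addrA subrK. Qed.

Lemma eqv0 w : eqv w 0 <-> Zero w.
Proof. by rewrite /eqv subr0. Qed.

Lemma Zero_eqv0 w : Zero w -> eqv 0 w.
Proof. by move=> Zw; apply/eqv_sym/eqv0. Qed.

Lemma Zero_eqv w v : eqv w v -> Zero v -> Zero w.
Proof. by move=> e Zv; have := zero_add e Zv; rewrite subrK. Qed.

Lemma eqvD w1 w2 v1 v2 : eqv w1 v1 -> eqv w2 v2 -> eqv (w1 + w2) (v1 + v2).
Proof. by move=> e1 e2; have := zero_add e1 e2; rewrite /eqv opprD addrACA. Qed.

Lemma eqvZ c w v : eqv w v -> eqv (c *: w) (c *: v).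
Proof. by rewrite /eqv -scalerBr; apply: zero_scale. Qed.

Lemma eqvN w v : eqv w v -> eqv (- w) (- v).
Proof. by move=> e; rewrite -!scaleN1r; apply: eqvZ. Qed.

Lemma eqvB w1 w2 v1 v2 : eqv w1 v1 -> eqv w2 v2 -> eqv (w1 - w2) (v1 - v2).
Proof. by move=> e1 e2; apply: eqvD => //; apply: eqvN. Qed.

Lemma eqv_sum I (r : seq I) (P : pred I) (G H : I -> form) :
  (forall i, P i -> eqv (G i) (H i)) ->
  eqv (\sum_(i <- r | P i) G i) (\sum_(i <- r | P i) H i).
Proof.
move=> e; apply: (big_ind2 eqv) => //; [exact: eqv_refl | by move=> *; apply: eqvD].
Qed.

Lemma set_nth_cat_size pre post z c :
  set_nth 0 (pre ++ z :: post) (size pre) c = pre ++ c :: post.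
Proof. by elim: pre => //= y pre ->. Qed.

Lemma dw_slotD pre post a b :
  eqv (dw (pre ++ (a + b) :: post)) (dw (pre ++ a :: post) + dw (pre ++ b :: post)).
Proof.
have := @gen_add F (pre ++ 0 :: post) (size pre) a b.
rewrite !set_nth_cat_size size_cat addnS ltnS leq_addr => /(_ isT).
by move/zero_gen; rewrite /eqv opprD addrA.
Qed.

Lemma dw_slotM pre post a b :
  eqv (dw (pre ++ (a * b) :: post))
      (a *: dw (pre ++ b :: post) + b *: dw (pre ++ a :: post)).
Proof.
have := @gen_leib F (pre ++ 0 :: post) (size pre) a b.
rewrite !set_nth_cat_size size_cat addnS ltnS leq_addr => /(_ isT).
by move/zero_gen; rewrite /eqv opprD addrA.
Qed.

Lemma Zero_dw_nuniq s : ~~ uniq s -> Zero (dw s).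
Proof.
by case/(uniqPn 0) => i [j [ij js e]]; apply/zero_gen/(gen_alt ij js e).
Qed.

Lemma Zero_dw_repeat pre mid post x : Zero (dw (pre ++ x :: mid ++ x :: post)).
Proof.
by apply: Zero_dw_nuniq; rewrite cat_uniq /= mem_cat inE eqxx orbT !andbF.
Qed.

Lemma Zero_fglift (f : seq F -> form) :
  (forall pre post a b, eqv (f (pre ++ (a + b) :: post))
                            (f (pre ++ a :: post) + f (pre ++ b :: post))) ->
  (forall pre post a b, eqv (f (pre ++ (a * b) :: post))
                            (a *: f (pre ++ b :: post) + b *: f (pre ++ a :: post))) ->
  (forall s, ~~ uniq s -> Zero (f s)) ->
  forall w, Zero w -> Zero (fglift f w).
Proof.
move=> fD fM f_alt w; elim=> {w} [w [xs i a b ilt|xs i a b ilt|xs i j ij js e]| | |].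
- have E c : set_nth 0 xs i c = take i xs ++ c :: drop i.+1 xs by rewrite set_nthE ilt.
  have := fD (take i xs) (drop i.+1 xs) a b.
  by rewrite !raddfB /= !fglift_dw !E /eqv opprD addrA.
- have E c : set_nth 0 xs i c = take i xs ++ c :: drop i.+1 xs by rewrite set_nthE ilt.
  have := fM (take i xs) (drop i.+1 xs) a b.
  by rewrite !raddfB /= !fgliftZ !fglift_dw !E /eqv opprD addrA.
- by rewrite fglift_dw; apply/f_alt/(uniqPn 0); exists i, j.
- by rewrite raddf0; exact: zero_0.
- by move=> w w' _ Zw _ Zw'; rewrite raddfD; apply: zero_add.
- by move=> c w _ Zw; rewrite fgliftZ; apply: zero_scale.
Qed.

Lemma Zero_wedgel w v : Zero w -> Zero (wedge w v).
Proof.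
apply: Zero_fglift => [pre post a b|pre post a b|s ns].
- rewrite /eqv -!fglift_addf -fglift_subf; apply: Zero_fglift_all => t.
  by rewrite -!catA; apply: dw_slotD.
- rewrite /eqv -!fglift_scalef -fglift_addf -fglift_subf; apply: Zero_fglift_all => t.
  by rewrite -!catA; apply: dw_slotM.
- apply: Zero_fglift_all => t; apply: Zero_dw_nuniq.
  by apply: contra ns; rewrite cat_uniq => /andP[].
Qed.

Lemma Zero_wedger w v : Zero v -> Zero (wedge w v).
Proof.
move=> Zv; rewrite /wedge fgliftE; apply: Zero_sum => s _; apply: zero_scale.
move: Zv; apply: Zero_fglift => [pre post a b|pre post a b|t nt].
- by rewrite !catA; apply: dw_slotD.
- by rewrite !catA; apply: dw_slotM.
- by apply: Zero_dw_nuniq; apply: contra nt; rewrite cat_uniq => /and3P[].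
Qed.

Lemma eqv_wedge w w' v v' : eqv w w' -> eqv v v' -> eqv (wedge w v) (wedge w' v').
Proof.
move=> e1 e2; apply: (@eqv_trans _ (wedge w' v)).
  by rewrite /eqv -wedgeBl; apply: Zero_wedgel.
by rewrite /eqv -wedgeBr; apply: Zero_wedger.
Qed.

Lemma eqv_wedger w v v' : eqv v v' -> eqv (wedge w v) (wedge w v').
Proof. exact/eqv_wedge/eqv_refl. Qed.

Lemma Zero_wedge_nuniq q w : ~~ uniq q -> Zero (wedge (dw q) w).
Proof.
move=> nq; rewrite wedge_dwl; apply: Zero_fglift_all => t; apply: Zero_dw_nuniq.
by apply: contra nq; rewrite cat_uniq => /andP[].
Qed.

End Relations.

Section Exterior.
Variable F : fieldType.
Local Notation form := (Form F).
Implicit Types (w v u : form) (s t q pre post mid : seq F) (x y : F).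

Lemma dw_swap pre post x y :
  eqv (dw (pre ++ x :: y :: post)) (- dw (pre ++ y :: x :: post)).
Proof.
pose d x y := dw (pre ++ x :: y :: post).
have d_sq z : Zero (d z z) by apply: (Zero_dw_repeat pre [::]).
have dD1 z z' z'' : eqv (d (z + z') z'') (d z z'' + d z' z'') by apply: dw_slotD.
have dD2 z z' z'' : eqv (d z'' (z + z')) (d z'' z + d z'' z').
  by have := dw_slotD (rcons pre z'') post z z'; rewrite -cats1 -!catA.
have expand : eqv (d (x + y) (x + y)) ((d x x + d x y) + (d y x + d y y)).
  by apply: eqv_trans (dD1 _ _ _) _; apply: eqvD; apply: dD2.
have : eqv 0 (d x y + d y x).
  apply: eqv_trans (Zero_eqv0 (d_sq (x + y))) _.
  apply: eqv_trans expand _.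
  have -> : d x y + d y x = (0 + d x y) + (d y x + 0) by rewrite add0r addr0.
  apply: eqvD; first by apply: eqvD; [apply/eqv0 | apply: eqv_refl].
  by apply: eqvD; [apply: eqv_refl | apply/eqv0].
by move/eqv_sym/eqv0; rewrite /eqv opprK.
Qed.

Lemma dw_move pre mid post x :
  eqv (dw (pre ++ mid ++ x :: post)) ((-1) ^+ size mid *: dw (pre ++ x :: mid ++ post)).
Proof.
elim: mid pre => [|m mid IH] pre /=; first by rewrite expr0 scale1r; apply: eqv_refl.
have := IH (rcons pre m); rewrite -!cats1 -!catA /= => e.
apply: eqv_trans e _; rewrite exprS mulN1r scaleNr -scalerN.
exact/eqvZ/dw_swap.
Qed.

Lemma dw_swap_blocks pre s t :
  eqv (dw (pre ++ s ++ t)) ((-1) ^+ (size s * size t) *: dw (pre ++ t ++ s)).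
Proof.
elim: t pre => [|x t IH] pre /=.
  by rewrite muln0 expr0 scale1r cats0; apply: eqv_refl.
apply: eqv_trans (dw_move pre s t x) _.
have := IH (rcons pre x); rewrite -!cats1 -!catA /= => e.
by rewrite mulnS exprD -scalerA; apply: eqvZ.
Qed.

Lemma dw0 pre post : Zero (dw (pre ++ 0 :: post)).
Proof. by have := dw_slotM pre post 0 0; rewrite mulr0 !scale0r addr0 => /eqv0. Qed.

Lemma dw1 pre post : Zero (dw (pre ++ 1 :: post)).
Proof.
have := dw_slotM pre post 1 1; rewrite mulr1 !scale1r /eqv opprD addrA subrr sub0r.
by move/ZeroN; rewrite opprK.
Qed.

Lemma dwN pre post x : eqv (dw (pre ++ - x :: post)) (- dw (pre ++ x :: post)).
Proof.
have := dw_slotD pre post x (- x); rewrite subrr => /(eqv_trans (Zero_eqv0 (dw0 _ _))).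
by rewrite /eqv sub0r => /ZeroN; rewrite opprK addrC opprK.
Qed.

Lemma dwV pre post x : eqv (dw (pre ++ x^-1 :: post)) (- x ^- 2 *: dw (pre ++ x :: post)).
Proof.
have [->|x0] := eqVneq x 0.
  by rewrite invr0 expr0n invr0 oppr0 scale0r; apply/eqv0/dw0.
have := dw_slotM pre post x x^-1; rewrite mulfV // => /(eqv_trans (Zero_eqv0 (dw1 _ _))).
move/eqv_sym/(eqvZ x^-1); rewrite scaler0 scalerDr !scalerA mulVf // scale1r.
by rewrite /eqv subr0 scaleNr opprK -invfM -expr2.
Qed.

Lemma dwX pre post y n :
  eqv (dw (pre ++ y ^+ n.+1 :: post)) ((n.+1%:R * y ^+ n) *: dw (pre ++ y :: post)).
Proof.
elim: n => [|n IH]; first by rewrite expr1 expr0 mulr1 scale1r; apply: eqv_refl.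
rewrite exprS; apply: eqv_trans (dw_slotM _ _ _ _) _.
apply: (@eqv_trans _ _ (y *: ((n.+1%:R * y ^+ n) *: dw (pre ++ y :: post))
                      + y ^+ n.+1 *: dw (pre ++ y :: post))).
  by apply: eqvD; [apply: eqvZ | apply: eqv_refl].
rewrite scalerA -scalerDl.
have -> : y * (n.+1%:R * y ^+ n) + y ^+ n.+1 = n.+2%:R * y ^+ n.+1.
  by rewrite (exprS y n) -[n.+2]addn1 natrD; ring.
exact: eqv_refl.
Qed.

Lemma dw_pchar_exp p pre post y : p \in [pchar F] -> Zero (dw (pre ++ y ^+ p :: post)).
Proof.
move=> hp; case: p hp (pcharf_prime hp) => [|n] // hp _.
by have := dwX pre post y n; rewrite (pcharf0 hp) mul0r scale0r => /eqv0.
Qed.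

Lemma homog_dw s : homog (size s) (dw s).
Proof. by move=> z; rewrite /dw domU1 inE => /eqP ->. Qed.

Lemma homog0 n : homog n (0 : form).
Proof. by move=> z; rewrite dom0. Qed.

Lemma homogD n w v : homog n w -> homog n v -> homog n (w + v).
Proof.
by move=> hw hv z /domD_subset; rewrite mem_cat => /orP[]; [apply: hw | apply: hv].
Qed.

Lemma homogZ n c w : homog n w -> homog n (c *: w).
Proof. by move=> hw z /domZ_subset; apply: hw. Qed.

Lemma homogB n w v : homog n w -> homog n v -> homog n (w - v).
Proof. by move=> hw hv; apply: homogD => //; rewrite -scaleN1r; apply: homogZ. Qed.

Lemma homog_sum n I (r : seq I) (P : pred I) (G : I -> form) :
  (forall i, P i -> homog n (G i)) -> homog n (\sum_(i <- r | P i) G i).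
Proof. by move=> hG; apply: big_ind => //; [exact: homog0 | exact: homogD]. Qed.

Lemma homog_fglift n m (f : seq F -> form) w :
  (forall s, size s = n -> homog m (f s)) -> homog n w -> homog m (fglift f w).
Proof.
move=> hf hw; rewrite fgliftE big_seq; apply: homog_sum => z zw.
exact/homogZ/hf/hw.
Qed.

Lemma homog_wedge n m w v : homog n w -> homog m v -> homog (n + m) (wedge w v).
Proof.
move=> hw hv; apply: (homog_fglift (n := n)) hw => s <-.
by apply: (homog_fglift (n := m)) hv => t <-; rewrite -size_cat; apply: homog_dw.
Qed.

Lemma wedge_swap n w s : homog n w ->
  eqv (wedge w (dw s)) ((-1) ^+ (n * size s) *: wedge (dw s) w).
Proof.
move=> hw; rewrite [w]formE wedge_suml wedge_sumr scaler_sumr.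
rewrite big_seq [X in eqv _ X]big_seq; apply: eqv_sum => z zw.
rewrite wedgeZl wedgeZr !wedge_dw scalerA mulrC -scalerA; apply: eqvZ.
by have := dw_swap_blocks [::] z s; rewrite (hw z zw).
Qed.

Lemma Zero_wedge_swap n w s : homog n w ->
  Zero (wedge w (dw s)) <-> Zero (wedge (dw s) w).
Proof.
move=> /(wedge_swap s) e; split => [Zws|Zsw]; last exact/(Zero_eqv e)/zero_scale.
have := zero_scale ((-1) ^+ (n * size s)) (Zero_eqv (eqv_sym e) Zws).
by rewrite scalerA -expr2 sqrr_sign scale1r.
Qed.

Definition homog_part m w : form :=
  fglift (fun s => if size s == m then dw s else 0) w.

Lemma Zero_homog_part m w : Zero w -> Zero (homog_part m w).
Proof.
apply: Zero_fglift => [pre post a b|pre post a b|s ns]; rewrite ?size_cat /=.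
- by case: eqP => _; [apply: dw_slotD | rewrite addr0; apply: eqv_refl].
- by case: eqP => _; [apply: dw_slotM | rewrite !scaler0 addr0; apply: eqv_refl].
- by case: eqP => _; [apply: Zero_dw_nuniq | exact: zero_0].
Qed.

Lemma homog_partE m n w : homog n w -> homog_part m w = if n == m then w else 0.
Proof.
move=> hw; rewrite /homog_part fgliftE big_seq; case: eqP => [<-|/eqP nm].
  by rewrite [in RHS](formE w) big_seq; apply: eq_bigr => z /hw ->; rewrite eqxx.
by rewrite big1 // => z /hw ->; rewrite (negbTE nm) scaler0.
Qed.

Lemma Zero_homog_diff n m w v : homog n w -> homog m v -> n != m ->
  Zero (w - v) -> Zero w.
Proof.
move=> hw hv nm /(Zero_homog_part n); rewrite /homog_part raddfB /=.
rewrite -!/(homog_part n _) (homog_partE n hw) (homog_partE n hv).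
by rewrite eq_sym (negbTE nm) eqxx subr0.
Qed.

Lemma Zero_wedge_nuniq_around q l v : (forall s, ~~ uniq (q ++ s ++ l)) ->
  Zero (wedge (dw q) (wedge v (dw l))).
Proof.
move=> nq; elim/form_ind: v => [|v1 v2 Z1 Z2|c s].
- by rewrite wedge0l wedge0r; exact: zero_0.
- by rewrite wedgeDl wedgeDr; apply: zero_add.
by rewrite wedgeZl wedgeZr !wedge_dw; apply/zero_scale/Zero_dw_nuniq.
Qed.

End Exterior.

Lemma nuniq_repeat (T : eqType) (s : seq T) : ~~ uniq s ->
  exists pre x mid post, s = pre ++ x :: mid ++ x :: post.
Proof.
elim: s => [|y s IH] //=; rewrite negb_and negbK => /orP[/splitPr[p1 p2]|/IH].
  by exists [::], y, p1, p2.
by case=> pre [x [mid [post ->]]]; exists (y :: pre), x, mid, post.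
Qed.

Lemma nuniq_cat_mem (T : eqType) (s1 s2 : seq T) x :
  x \in s1 -> x \in s2 -> ~~ uniq (s1 ++ s2).
Proof. by move=> x1 x2; rewrite cat_uniq; apply/negP => /and3P[_ /hasPn/(_ x x2)/negP]. Qed.

(** * Contraction with a derivation *)

Section Contraction.
Variable F : fieldType.
Local Notation form := (Form F).
Implicit Types (w v u : form) (s t q pre post mid : seq F) (x y : F).
Variable D : F -> F.
Hypothesis DD : forall x y, D (x + y) = D x + D y.
Hypothesis DM : forall x y, D (x * y) = x * D y + y * D x.

Fixpoint contract_seq s : form :=
  if s is x :: s' then D x *: dw s' - wedge (dw [:: x]) (contract_seq s') else 0.

Definition contract w : form := fglift contract_seq w.

Lemma contract_dw s : contract (dw s) = contract_seq s.
Proof. exact: fglift_dw. Qed.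

Lemma contract0 : contract 0 = 0.
Proof. exact: raddf0. Qed.

Lemma contractD w v : contract (w + v) = contract w + contract v.
Proof. exact: raddfD. Qed.

Lemma contractZ c w : contract (c *: w) = c *: contract w.
Proof. exact: fgliftZ. Qed.

Lemma contract_wedge1 y w :
  contract (wedge (dw [:: y]) w) = D y *: w - wedge (dw [:: y]) (contract w).
Proof.
elim/form_ind: w => [|w v IHw IHv|c s].
- by rewrite wedge0r contract0 wedge0r scaler0 subr0.
- by rewrite wedgeDr contractD IHw IHv contractD wedgeDr scalerDr opprD addrACA.
rewrite wedgeZr contractZ wedge_dw contract_dw contractZ contract_dw /=.
by rewrite wedgeZr scalerBr scalerA mulrC -scalerA.
Qed.

Lemma contract_wedge_ker q w : (forall x, x \in q -> D x = 0) ->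
  contract (wedge (dw q) w) = (-1) ^+ size q *: wedge (dw q) (contract w).
Proof.
elim: q w => [|y q IH] w Dq; first by rewrite !wedge_nil expr0 scale1r.
have Dq' x : x \in q -> D x = 0 by move=> xq; apply: Dq; rewrite inE xq orbT.
rewrite -cat1s -wedge_dw wedgeA contract_wedge1 Dq ?mem_head // scale0r sub0r.
by rewrite IH // wedgeZr -wedgeA wedge_dw exprS mulN1r scaleNr.
Qed.

Lemma contract_seq_slotD pre post a b :
  eqv (contract_seq (pre ++ (a + b) :: post))
      (contract_seq (pre ++ a :: post) + contract_seq (pre ++ b :: post)).
Proof.
elim: pre => [|y pre IH] /=; rewrite addrACA -opprD; apply: eqvB.
- by rewrite DD scalerDl; apply: eqv_refl.
- by rewrite -wedgeDl; apply/eqv_wedge/eqv_refl/(dw_slotD [::]).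
- by rewrite -scalerDr; apply/eqvZ/dw_slotD.
- by rewrite -wedgeDr; apply: eqv_wedger.
Qed.

Lemma contract_seq_slotM pre post a b :
  eqv (contract_seq (pre ++ (a * b) :: post))
      (a *: contract_seq (pre ++ b :: post) + b *: contract_seq (pre ++ a :: post)).
Proof.
elim: pre => [|y pre IH] /=; rewrite !scalerBr addrACA -opprD; apply: eqvB.
- by rewrite DM scalerDl !scalerA; apply: eqv_refl.
- by rewrite -!wedgeZl -wedgeDl; apply/eqv_wedge/eqv_refl/(dw_slotM [::]).
- rewrite !scalerA ![_ * D y]mulrC -!scalerA -scalerDr.
  exact/eqvZ/dw_slotM.
- by rewrite -!wedgeZr -wedgeDr; apply: eqv_wedger.
Qed.

Lemma contract_seq_repeat q mid post x : x \in q ->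
  eqv (wedge (dw q) (contract_seq (mid ++ x :: post)))
      (((-1) ^+ size mid * D x) *: dw (q ++ mid ++ post)).
Proof.
elim: mid q => [|m mid IH] q xq /=.
  rewrite wedgeBr wedgeZr wedge_dw -wedgeA wedge_dw expr0 mul1r.
  rewrite -[X in eqv _ X]subr0; apply: eqvB; first exact: eqv_refl.
  by apply/eqv0/Zero_wedge_nuniq/(nuniq_cat_mem xq)/mem_head.
rewrite wedgeBr wedgeZr wedge_dw -wedgeA wedge_dw.
rewrite exprS mulN1r mulNr scaleNr -[X in eqv _ X]sub0r; apply: eqvB.
  by apply/eqv0/zero_scale/Zero_dw_nuniq/(nuniq_cat_mem xq); rewrite mem_cat mem_head orbT.
by have := IH (q ++ [:: m]); rewrite -catA; apply; rewrite mem_cat xq.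
Qed.

Lemma Zero_contract_seq s : ~~ uniq s -> Zero (contract_seq s).
Proof.
case/nuniq_repeat => pre [x [mid [post ->]]]; elim: pre => [|y pre IH] /=; last first.
  by apply: ZeroB; [apply/zero_scale/Zero_dw_repeat | apply: Zero_wedger].
apply/eqv0; apply: (@eqv_trans _ _ (D x *: ((-1) ^+ size mid *: dw (x :: mid ++ post))
    - ((-1) ^+ size mid * D x) *: dw ([:: x] ++ mid ++ post))).
  apply: eqvB; first exact/eqvZ/(dw_move [::]).
  by apply: contract_seq_repeat; rewrite inE.
by rewrite scalerA mulrC subrr; apply: eqv_refl.
Qed.

Lemma Zero_contract w : Zero w -> Zero (contract w).
Proof.
apply: Zero_fglift; first exact: contract_seq_slotD; first exact: contract_seq_slotM.
exact: Zero_contract_seq.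
Qed.

Lemma homog_contract_seq s : homog (size s).-1 (contract_seq s).
Proof.
elim: s => [|x s IH] /=; first exact: homog0.
apply: homogB; first exact/homogZ/homog_dw.
case: s IH => [|y s] IH /=; first by rewrite wedge0r; apply: homog0.
by have := homog_wedge (homog_dw (s := [:: x])) IH; rewrite add1n.
Qed.

Lemma homog_contract n w : homog n w -> homog n.-1 (contract w).
Proof. by apply: homog_fglift => s <-; apply: homog_contract_seq. Qed.

End Contraction.

(** * Differentials of elements of F^p(T) *)

Section Span.
Variable F : fieldType.
Local Notation form := (Form F).
Implicit Types (w v : form) (pre post : seq F) (x y z : F).
Variable T : F -> Prop.

(* dx is an F-combination of the dt, t in T, with the same coefficients in every slot
   of a wedge product. *)
Definition dspan x := exists2 cs : seq (F * F), (forall ct, ct \in cs -> T ct.2) &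
  forall pre post,
    eqv (dw (pre ++ x :: post)) (\sum_(ct <- cs) ct.1 *: dw (pre ++ ct.2 :: post)).

Lemma dspan_gen x : T x -> dspan x.
Proof.
move=> Tx; exists [:: (1, x)] => [ct|pre post]; first by rewrite inE => /eqP ->.
by rewrite big_seq1 scale1r; apply: eqv_refl.
Qed.

Lemma dspan_pchar_exp p y : p \in [pchar F] -> dspan (y ^+ p).
Proof.
by move=> hp; exists [::] => // pre post; rewrite big_nil; apply/eqv0/dw_pchar_exp.
Qed.

Lemma dspan_combo x y z a b : dspan x -> dspan y ->
  (forall pre post, eqv (dw (pre ++ z :: post))
                        (a *: dw (pre ++ x :: post) + b *: dw (pre ++ y :: post))) ->
  dspan z.
Proof.
move=> [cs Tcs dx] [cs' Tcs' dy] dz.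
exists ([seq (a * ct.1, ct.2) | ct <- cs] ++ [seq (b * ct.1, ct.2) | ct <- cs']).
  move=> ct; rewrite mem_cat => /orP[] /mapP[ct0 ct0cs ->].
    exact: (Tcs ct0).
  exact: (Tcs' ct0).
move=> pre post; apply: eqv_trans (dz pre post) _.
rewrite big_cat !big_map; apply: eqvD.
  apply: eqv_trans (eqvZ a (dx pre post)) _; rewrite scaler_sumr.
  by apply: eqv_sum => ct _ /=; rewrite scalerA; apply: eqv_refl.
apply: eqv_trans (eqvZ b (dy pre post)) _; rewrite scaler_sumr.
by apply: eqv_sum => ct _ /=; rewrite scalerA; apply: eqv_refl.
Qed.

Lemma dspan_subfield p : p \in [pchar F] -> subfield_closed dspan.
Proof.
move=> hp; have p_gt0 := prime_gt0 (pcharf_prime hp).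
split => [||x y dx dy|x dx|].
- by have := dspan_pchar_exp 0 hp; rewrite expr0n eqn0Ngt p_gt0.
- by have := dspan_pchar_exp 1 hp; rewrite expr1n.
- apply: (dspan_combo (a := 1) (b := 1) dx dy) => pre post.
  by rewrite !scale1r; apply: dw_slotD.
- apply: (dspan_combo (a := -1) (b := 0) dx dx) => pre post.
  by rewrite scaleN1r scale0r addr0; apply: dwN.
split => [x y dx dy|x dx]; first by apply: dspan_combo dy dx _ => pre post; apply: dw_slotM.
by apply: (dspan_combo (b := 0) dx dx) => pre post; rewrite scale0r addr0; apply: dwV.
Qed.

Lemma adjoin_dspan p x : p \in [pchar F] -> adjoin p T x -> dspan x.
Proof.
move=> hp; apply; first exact: dspan_subfield hp; last exact: dspan_gen.
by move=> _ [y ->]; apply: dspan_pchar_exp.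
Qed.

Lemma dspan_seq u : (forall x, x \in u -> dspan x) ->
  exists2 css : seq (F * seq F),
    (forall cl, cl \in css -> size cl.2 = size u /\ forall y, y \in cl.2 -> T y) &
    forall pre post, eqv (dw (pre ++ u ++ post))
                         (\sum_(cl <- css) cl.1 *: dw (pre ++ cl.2 ++ post)).
Proof.
elim: u => [|x u IH] du.
  exists [:: (1, [::])] => [cl|pre post]; first by rewrite inE => /eqP ->.
  by rewrite big_seq1 scale1r; apply: eqv_refl.
have [cs Tcs dx] := du x (mem_head _ _).
have [css Tcss du'] := IH (fun y yu => du y (@mem_behead _ (x :: u) _ yu)).
exists [seq (ct.1 * cl.1, ct.2 :: cl.2) | ct <- cs, cl <- css].
  move=> cl /allpairsP[[ct cl'] [ctcs cl'css ->]] /=.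
  have [-> Tcl'] := Tcss _ cl'css; split=> // y.
  by rewrite inE => /orP[/eqP ->|]; [apply: Tcs | apply: Tcl'].
move=> pre post; rewrite big_allpairs_dep /=.
apply: eqv_trans (dx pre (u ++ post)) _; apply: eqv_sum => ct _.
have := eqvZ ct.1 (du' (rcons pre ct.2) post); rewrite cat_rcons scaler_sumr => /eqv_trans.
by apply; apply: eqv_sum => cl _; rewrite scalerA cat_rcons; apply: eqv_refl.
Qed.

Lemma dw_adjoin_span p u : p \in [pchar F] -> (forall x, x \in u -> adjoin p T x) ->
  exists2 css : seq (F * seq F),
    (forall cl, cl \in css -> size cl.2 = size u /\ forall y, y \in cl.2 -> T y) &
    eqv (dw u) (\sum_(cl <- css) cl.1 *: dw cl.2).
Proof.
move=> hp Tu; have [css Tcss du] := dspan_seq (fun x xu => adjoin_dspan hp (Tu x xu)).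
by exists css => //; have := du [::] [::]; under eq_bigr do rewrite cats0; rewrite cats0.
Qed.

End Span.

(** * Degrees of extensions *)

Section Degree.
Variable F : fieldType.
Variable K : F -> Prop.
Hypotheses (K0 : K 0) (K1 : K 1) (KD : forall x y, K x -> K y -> K (x + y))
  (KN : forall x, K x -> K (- x)) (KM : forall x y, K x -> K y -> K (x * y)).

Definition spans (b : seq F) (L : F -> Prop) := forall x, L x ->
  exists c : seq F, [/\ size c = size b, (forall y, y \in c -> K y)
                      & x = \sum_(i < size b) c`_i * b`_i].

Definition independent (b : seq F) := forall c : seq F, size c = size b ->
  (forall x, x \in c -> K x) -> \sum_(i < size b) c`_i * b`_i = 0 -> forall i, c`_i = 0.

Lemma K_sum I (r : seq I) (P : pred I) (f : I -> F) :
  (forall i, P i -> K (f i)) -> K (\sum_(i <- r | P i) f i).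
Proof. by move=> Kf; apply: big_ind. Qed.

Lemma spans_matrix (b b' : seq F) (L : F -> Prop) : spans b L -> (forall x, x \in b' -> L x) ->
  exists2 M : 'M[F]_(size b', size b), (forall i l, K (M i l))
    & forall i : 'I_(size b'), b'`_i = \sum_l M i l * b`_l.
Proof.
move=> span_b b'L; have /fin_all_exists[c hc] : forall i : 'I_(size b'), exists c : seq F,
    [/\ size c = size b, (forall y, y \in c -> K y) & b'`_i = \sum_(l < size b) c`_l * b`_l].
  by move=> i; apply/span_b/b'L/mem_nth.
exists (\matrix_(i, l) (c i)`_l) => [i l|i]; rewrite ?mxE.
  by case: (hc i) => size_c Kc _; apply/Kc/mem_nth; rewrite size_c.
by case: (hc i) => _ _ ->; apply: eq_bigr => l _; rewrite mxE.
Qed.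

Lemma independent_fixed_matrix (b : seq F) (A : 'M[F]_(size b)) : independent b ->
  (forall i j, K (A i j)) -> (forall i : 'I_(size b), b`_i = \sum_j A i j * b`_j) -> A = 1%:M.
Proof.
move=> ind_b KA bA; apply/matrixP => i j.
pose c := [seq A i l - (i == l)%:R | l <- enum 'I_(size b)].
have c_nth (l : 'I_(size b)) : c`_l = A i l - (i == l)%:R :> F.
  by rewrite (nth_map l) ?size_enum_ord // nth_ord_enum.
have : c`_j = 0.
  apply: ind_b => [|x /mapP[l _ ->]|]; first by rewrite size_map size_enum_ord.
    by apply/KD/KN => //; case: (i == l); rewrite ?K0.
  under eq_bigr do rewrite c_nth mulrBl.
  rewrite sumrB -bA (bigD1 i) //= eqxx mul1r big1 ?addr0 ?subrr // => l li.
  by rewrite eq_sym (negbTE li) mul0r.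
by rewrite c_nth mxE => /eqP; rewrite subr_eq0 => /eqP.
Qed.

Lemma ext_degree_le (L : F -> Prop) d1 d2 :
  ext_degree K L d1 -> ext_degree K L d2 -> (d2 <= d1)%N.
Proof.
move=> [b1 [<- b1L _ span1]] [b2 [<- b2L ind2 span2]].
have [M MK b2M] := spans_matrix span1 b2L.
have [M' M'K b1M'] := spans_matrix span2 b1L.
have MM' : M *m M' = 1%:M.
  apply: independent_fixed_matrix ind2 _ _ => [i j|i].
    by rewrite mxE; apply: K_sum => l _; apply: KM; [apply: MK | apply: M'K].
  rewrite b2M; under eq_bigr do rewrite b1M' mulr_sumr.
  rewrite exchange_big; apply: eq_bigr => m _; rewrite mxE mulr_suml.
  by apply: eq_bigr => l _; rewrite mulrA.
by rewrite -(mxrank1 F (size b2)) -MM'; apply: leq_trans (mxrankM_maxl _ _) (rank_leq_col _).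
Qed.

Lemma ext_degree_uniq (L : F -> Prop) d1 d2 :
  ext_degree K L d1 -> ext_degree K L d2 -> d1 = d2.
Proof.
by move=> e1 e2; apply/eqP; rewrite eqn_leq (ext_degree_le e1 e2) (ext_degree_le e2 e1).
Qed.

End Degree.

(** * Extending derivations *)

Section PartialDerivations.
Variable F : fieldType.
Variable p : nat.
Hypothesis hp : p \in [pchar F].
Local Notation Fp := (@Fp F p).
Implicit Types (x y z : F) (q r Dq Dr : {poly F}).

Let p_gt0 : (0 < p)%N := prime_gt0 (pcharf_prime hp).

Lemma Fp0 : Fp 0. Proof. by exists 0; rewrite expr0n gtn_eqF // p_gt0. Qed.
Lemma Fp1 : Fp 1. Proof. by exists 1; rewrite expr1n. Qed.
Lemma Fp_exp x : Fp (x ^+ p). Proof. by exists x. Qed.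

Lemma FpD x y : Fp x -> Fp y -> Fp (x + y).
Proof.
case=> u -> [v ->]; exists (u + v).
by have := pFrobenius_autD_comm hp (mulrC u v); rewrite !pFrobenius_autE.
Qed.

Lemma FpN x : Fp x -> Fp (- x).
Proof.
by case=> u ->; exists (- u); have := pFrobenius_autN hp u; rewrite !pFrobenius_autE.
Qed.

Lemma FpM x y : Fp x -> Fp y -> Fp (x * y).
Proof. by case=> u -> [v ->]; exists (u * v); rewrite exprMn. Qed.

Lemma FpV x : Fp x -> Fp x^-1.
Proof. by case=> u ->; exists u^-1; rewrite exprVn. Qed.

(* The graph of a derivation, vanishing on F^p, of the subfield {x | exists dx, G x dx};
   working with graphs lets Zorn's lemma act on sets of pairs. *)
Definition pder (G : F -> F -> Prop) :=
  [/\ (forall x dx dx', G x dx -> G x dx' -> dx = dx'),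
      (forall y, Fp y -> G y 0),
      (forall x dx y dy, G x dx -> G y dy -> G (x + y) (dx + dy)),
      (forall x dx y dy, G x dx -> G y dy -> G (x * y) (x * dy + y * dx)) &
      (forall x dx, G x dx -> G (- x) (- dx)) /\
      (forall x dx, G x dx -> exists dy, G x^-1 dy)].

Section PartialDerivation.
Variable G : F -> F -> Prop.
Hypothesis pderG : pder G.

Definition pdom x := exists dx, G x dx.

Lemma pder_fun x dx dx' : G x dx -> G x dx' -> dx = dx'.
Proof. by case: pderG => h _ _ _ _; apply: h. Qed.

Lemma pder_Fp y : Fp y -> G y 0.
Proof. by case: pderG => _ h _ _ _; apply: h. Qed.

Lemma pderD x dx y dy : G x dx -> G y dy -> G (x + y) (dx + dy).
Proof. by case: pderG => _ _ h _ _; apply: h. Qed.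

Lemma pderM x dx y dy : G x dx -> G y dy -> G (x * y) (x * dy + y * dx).
Proof. by case: pderG => _ _ _ h _; apply: h. Qed.

Lemma pderN x dx : G x dx -> G (- x) (- dx).
Proof. by case: pderG => _ _ _ _ [h _]; apply: h. Qed.

Lemma pderV x dx : G x dx -> exists dy, G x^-1 dy.
Proof. by case: pderG => _ _ _ _ [_ h]; apply: h. Qed.

Lemma pder0 : G 0 0. Proof. exact/pder_Fp/Fp0. Qed.
Lemma pder1 : G 1 0. Proof. exact/pder_Fp/Fp1. Qed.

Lemma pder_sum I (r : seq I) (P : pred I) (f g : I -> F) :
  (forall i, P i -> G (f i) (g i)) -> G (\sum_(i <- r | P i) f i) (\sum_(i <- r | P i) g i).
Proof. by move=> fg; apply: (big_ind2 G) => //; [exact: pder0 | move=> *; exact: pderD]. Qed.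

Lemma pdom_Fp y : Fp y -> pdom y. Proof. by exists 0; apply: pder_Fp. Qed.
Lemma pdomD x y : pdom x -> pdom y -> pdom (x + y).
Proof. by case=> dx Gx [dy Gy]; exists (dx + dy); apply: pderD. Qed.

Lemma pdomM x y : pdom x -> pdom y -> pdom (x * y).
Proof. by case=> dx Gx [dy Gy]; eexists; apply: pderM Gx Gy. Qed.

Lemma pdomN x : pdom x -> pdom (- x). Proof. by case=> dx Gx; eexists; apply: pderN Gx. Qed.
Lemma pdomV x : pdom x -> pdom x^-1. Proof. by case=> dx /pderV. Qed.
Lemma pdom0 : pdom 0. Proof. exact/pdom_Fp/Fp0. Qed.
Lemma pdom1 : pdom 1. Proof. exact/pdom_Fp/Fp1. Qed.

Lemma pdomX x n : pdom x -> pdom (x ^+ n).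
Proof.
by move=> Dx; elim: n => [|n IH]; [rewrite expr0; exact: pdom1 | rewrite exprS; apply: pdomM].
Qed.

Lemma pdom_of_exp x k : (0 < k < p)%N -> pdom (x ^+ k) -> pdom x.
Proof.
case/andP=> k_gt0 kp Dxk; have [->|x0] := eqVneq x 0; first exact: pdom0.
have [a _] := Bezoutl k p_gt0.
have -> : gcdn p k = 1%N.
  by apply/eqP; rewrite -/(coprime p k) prime_coprime ?gtnNdvd ?(pcharf_prime hp).
move=> /dvdnP[c ec].
have e : (x ^+ p) ^+ c = x * (x ^+ k) ^+ a by rewrite -!exprM mulnC -ec exprD expr1 mulnC.
have -> : x = (x ^+ p) ^+ c / (x ^+ k) ^+ a by rewrite e mulfK // !expf_neq0.
by apply: pdomM; [apply/pdomX/pdom_Fp/Fp_exp | apply/pdomV/pdomX].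
Qed.

Definition pder_coef q Dq := forall i, G q`_i Dq`_i.
Definition pdom_poly q := forall i, pdom q`_i.

Lemma pdom_pder_coef q Dq : pder_coef q Dq -> pdom_poly q.
Proof. by move=> GqDq i; exists Dq`_i. Qed.

Lemma pder_coef_exists q : pdom_poly q -> exists Dq, pder_coef q Dq.
Proof.
move=> /(_ _)/boolp.cid Dq; exists (\poly_(i < size q) sval (Dq i)) => i; rewrite coef_poly.
by case: ltnP => [_|si]; [exact: svalP | rewrite nth_default //; exact: pder0].
Qed.

Lemma pder_coefD q Dq r Dr : pder_coef q Dq -> pder_coef r Dr -> pder_coef (q + r) (Dq + Dr).
Proof. by move=> Gq Gr i; rewrite !coefD; apply: pderD. Qed.

Lemma pder_coefN q Dq : pder_coef q Dq -> pder_coef (- q) (- Dq).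
Proof. by move=> Gq i; rewrite !coefN; apply: pderN. Qed.

Lemma pder_coefM q Dq r Dr : pder_coef q Dq -> pder_coef r Dr ->
  pder_coef (q * r) (Dq * r + q * Dr).
Proof.
move=> Gq Gr i; rewrite coefD !coefM -big_split /=.
by apply: pder_sum => j _; rewrite (mulrC Dq`_j) addrC; apply: pderM.
Qed.

Lemma pder_coefC c dc : G c dc -> pder_coef c%:P dc%:P.
Proof. by move=> Gc i; rewrite !coefC; case: (i == 0%N) => //; exact: pder0. Qed.

Lemma pder_coefX : pder_coef 'X 0.
Proof. by move=> i; rewrite coefX coef0; case: (i == 1%N); [exact: pder1 | exact: pder0]. Qed.

Lemma pdom_polyD q r : pdom_poly q -> pdom_poly r -> pdom_poly (q + r).
Proof. by move=> Dq Dr i; rewrite coefD; apply: pdomD. Qed.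

Lemma pdom_polyN q : pdom_poly q -> pdom_poly (- q).
Proof. by move=> Dq i; rewrite coefN; apply: pdomN. Qed.

Lemma pdom_polyM q r : pdom_poly q -> pdom_poly r -> pdom_poly (q * r).
Proof.
by move=> /pder_coef_exists[Dq Gq] /pder_coef_exists[Dr Gr]; apply/pdom_pder_coef/pder_coefM.
Qed.

Lemma pdom_polyC c : pdom c -> pdom_poly c%:P.
Proof. by case=> dc /pder_coefC/pdom_pder_coef. Qed.

Lemma pdom_polyX : pdom_poly 'X.
Proof. exact: pdom_pder_coef pder_coefX. Qed.

Lemma pdom_polyXn q n : pdom_poly q -> pdom_poly (q ^+ n).
Proof.
move=> Dq; elim: n => [|n IH]; first by rewrite expr0; apply/pdom_polyC/pdom1.
by rewrite exprS; apply: pdom_polyM.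
Qed.

Lemma pdom_polyZ c q : pdom c -> pdom_poly q -> pdom_poly (c *: q).
Proof. by move=> Dc Dq; rewrite -mul_polyC; apply/pdom_polyM/Dq/pdom_polyC. Qed.

Lemma pdom_poly_divp m : pdom_poly m -> m \is monic -> forall r, pdom_poly r ->
  exists h r0, [/\ pdom_poly h, pdom_poly r0, r = h * m + r0 & (size r0 < size m)%N].
Proof.
move=> Dm mm r; have [n] := ubnP (size r); elim: n r => // n IH r sr Dr.
have [lt|ge] := ltnP (size r) (size m).
  exists 0, r; rewrite mul0r add0r; split=> // i.
  by rewrite coef0; apply: pdom0.
have sm : (0 < size m)%N by rewrite size_poly_gt0 monic_neq0.
set k := (size r - size m)%N; set c := lead_coef r.
set r' := r - (c *: 'X^k) * m.
have Dc : pdom c by apply: Dr.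
have Dr' : pdom_poly r'.
  apply/pdom_polyD/pdom_polyN/pdom_polyM => //.
  exact/pdom_polyZ/pdom_polyXn/pdom_polyX.
have sr' : (size r' < size r)%N.
  have sr0 : (0 < size r)%N by apply: leq_trans sm ge.
  rewrite -[X in (_ < X)%N](prednK sr0) ltnS; apply/leq_sizeP => j hj.
  rewrite coefB -scalerAl coefZ coefXnM ltnNge (_ : (k <= j)%N) /=; last by rewrite /k; lia.
  have [->|ne] := eqVneq j (size r).-1.
    rewrite (_ : ((size r).-1 - k)%N = (size m).-1); last by rewrite /k; lia.
    by rewrite -!lead_coefE (monicP mm) mulr1 subrr.
  have {}hj : (size r <= j)%N by rewrite -(prednK sr0) ltn_neqAle eq_sym ne hj.
  rewrite !nth_default ?mulr0 ?subr0 // /k.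
  by move: ge hj; clear; move: (size m) (size r) j => a b c; lia.
have [h [r0 [Dh Dr0 e s0]]] := IH r' (leq_trans sr' sr) Dr'.
exists (h + c *: 'X^k), r0; split => //.
  exact/pdom_polyD/pdom_polyZ/pdom_polyXn/pdom_polyX.
by rewrite -[r](subrK ((c *: 'X^k) * m)) -/r' e mulrDl addrAC.
Qed.

Lemma XsubC_expp y : ('X - y%:P) ^+ p = 'X^p - (y ^+ p)%:P :> {poly F}.
Proof.
have hp' : p \in [pchar {poly F}] by rewrite pchar_poly.
have := pFrobenius_autB_comm hp' (mulrC 'X (y%:P)); rewrite !pFrobenius_autE.
by rewrite -polyC_exp.
Qed.

Section Root.
Variable x : F.
Hypothesis x_notin : ~ pdom x.
Local Notation m := ('X^p - (x ^+ p)%:P).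

Lemma pdom_poly_m : pdom_poly m.
Proof. exact/pdom_polyD/pdom_polyN/pdom_polyC/pdom_Fp/Fp_exp/pdom_polyXn/pdom_polyX. Qed.

Lemma m_monic : m \is monic. Proof. exact/monicXnsubC/p_gt0. Qed.

Lemma m_root : m.[x] = 0. Proof. by rewrite hornerD hornerN hornerXn hornerC subrr. Qed.

Lemma monic_dvdp_m_size q : pdom_poly q -> q \is monic -> q %| m -> q.[x] = 0 ->
  (p < size q)%N.
Proof.
move=> Dq mq; rewrite -XsubC_expp => /dvdp_exp_XsubCP[k _].
rewrite eqp_monic ?monic_exp ?monicXsubC // => /eqP qE qx.
have sq : size q = k.+1 by rewrite qE size_exp_XsubC.
have k_gt0 : (0 < k)%N.
  by case: k qE {sq} => // qE; move: qx; rewrite qE expr0 hornerC => /eqP; rewrite oner_eq0.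
rewrite ltnNge; apply/negP => sqp.
apply: x_notin (@pdom_of_exp x k _ _); first by rewrite k_gt0 -ltnS -sq.
have := Dq 0%N; rewrite -horner_coef0 qE horner_exp hornerXsubC sub0r exprNn.
by move=> /(pdomM (pdomX k (pdomN pdom1))); rewrite mulrA -expr2 sqrr_sign mul1r.
Qed.

Lemma pdom_poly_root_eq0 q : pdom_poly q -> (size q <= p)%N -> q.[x] = 0 -> q = 0.
Proof.
have [n] := ubnP (size q); elim: n q => // n IH q sq Dq sqp qx.
have [//|q0] := eqVneq q 0; set c := lead_coef q.
have c0 : c != 0 by rewrite lead_coef_eq0.
set q1 := c^-1 *: q.
have Dq1 : pdom_poly q1 by apply/pdom_polyZ/Dq/pdomV/Dq.
have mq1 : q1 \is monic by apply/monicP; rewrite lead_coefZ mulVf.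
have sq1 : size q1 = size q by rewrite size_scale // invr_eq0.
have q1x : q1.[x] = 0 by rewrite hornerZ qx mulr0.
have [h [r1 [_ Dr1 e s1]]] := pdom_poly_divp Dq1 mq1 pdom_poly_m.
have r1x : r1.[x] = 0.
  by have := congr1 (horner^~ x) e; rewrite /= m_root hornerD hornerM q1x mulr0 add0r.
rewrite sq1 in s1; have r10 : r1 = 0.
  by apply: IH r1x; [apply: leq_trans s1 _; rewrite -ltnS | | apply/ltnW/(leq_trans s1)].
have : (p < size q1)%N.
  by apply: (monic_dvdp_m_size Dq1 mq1) q1x; rewrite e r10 addr0 dvdp_mull.
by rewrite sq1 ltnNge sqp.
Qed.

Lemma pder_root_eq0 r Dr v : pder_coef r Dr -> r.[x] = 0 -> Dr.[x] + (r^`()).[x] * v = 0.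
Proof.
move=> Gr rx.
have [h [r0 [Dh Dr0 e s0]]] := pdom_poly_divp pdom_poly_m m_monic (pdom_pder_coef Gr).
have r00 : r0 = 0.
  apply: pdom_poly_root_eq0 => //; first by move: s0; rewrite size_XnsubC ?p_gt0.
  by have := congr1 (horner^~ x) e; rewrite /= rx hornerD hornerM m_root mulr0 add0r.
rewrite r00 addr0 in e.
have [Dh' GDh'] := pder_coef_exists Dh.
have Gm : pder_coef m 0.
  move=> i; rewrite coef0 coefB coefXn coefC; apply: pder_Fp.
  apply: FpD; first by case: (i == p); [exact: Fp1 | exact: Fp0].
  by apply: FpN; case: (i == 0%N); [exact: Fp_exp | exact: Fp0].
have eD : Dr = Dh' * m + h * 0.
  by apply/polyP => i; apply: pder_fun (Gr i) _; rewrite e; apply: pder_coefM.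
have dm : m^`() = 0.
  rewrite derivB derivC subr0 derivXn -mulr_natr.
  by rewrite (pcharf0 (_ : p \in [pchar {poly F}])) ?mulr0 // pchar_poly.
by rewrite eD e derivM dm !mulr0 !addr0 !hornerM m_root !mulr0 mul0r addr0.
Qed.

Variable v : F.

(* The extension of G to L(x) with x |-> v: q(x) |-> (q^G)(x) + q'(x) v.  It is well
   defined since X^p - x^p generates the polynomials over L vanishing at x. *)
Definition pder_adjoin z dz :=
  exists q Dq, [/\ pder_coef q Dq, z = q.[x] & dz = Dq.[x] + (q^`()).[x] * v].

Lemma pder_adjoin_ext z dz : G z dz -> pder_adjoin z dz.
Proof.
move=> Gz; exists z%:P, dz%:P; split; [exact: pder_coefC | by rewrite hornerC |].
by rewrite hornerC derivC horner0 mul0r addr0.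
Qed.

Lemma pder_adjoin_pder : pder pder_adjoin.
Proof.
split.
- move=> z dz dz' [q [Dq [Gq -> ->]]] [q' [Dq' [Gq' e ->]]].
  have := pder_root_eq0 v (pder_coefD Gq (pder_coefN Gq')).
  rewrite !(hornerD, hornerN, derivD, derivN) -e subrr => /(_ erefl) h0.
  by apply/eqP; rewrite -subr_eq0 -h0; apply/eqP; ring.
- move=> y Fy; exists y%:P, 0; split; [|by rewrite hornerC|].
  + by rewrite -polyC0; apply/pder_coefC/pder_Fp.
  + by rewrite derivC !horner0 mul0r addr0.
- move=> z dz y dy [q [Dq [Gq -> ->]]] [r [Dr [Gr -> ->]]].
  exists (q + r), (Dq + Dr); split; [exact: pder_coefD | by rewrite hornerD |].
  by rewrite !hornerD derivD hornerD; ring.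
- move=> z dz y dy [q [Dq [Gq -> ->]]] [r [Dr [Gr -> ->]]].
  exists (q * r), (Dq * r + q * Dr); split; [exact: pder_coefM | by rewrite hornerM |].
  by rewrite derivM !hornerD !hornerM; ring.
split=> [z dz [q [Dq [Gq -> ->]]]|z dz [q [Dq [Gq -> _]]]].
  exists (- q), (- Dq); split; [exact: pder_coefN | by rewrite hornerN |].
  by rewrite derivN !hornerN; ring.
have [->|qx0] := eqVneq q.[x] 0; first by exists 0; rewrite invr0; apply/pder_adjoin_ext/pder0.
pose c := (q.[x] ^+ p)^-1; pose qq := c%:P * q ^+ p.-1.
have Dqq : pdom_poly qq.
  by apply/pdom_polyM/pdom_polyXn/pdom_pder_coef/Gq/pdom_polyC/pdom_Fp/FpV/Fp_exp.
have [Dqq' Gqq] := pder_coef_exists Dqq.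
exists (Dqq'.[x] + (qq^`()).[x] * v), qq, Dqq'; split => //.
rewrite /qq /c hornerCM horner_exp -{1}(prednK p_gt0) exprS invfM mulfVK //.
by rewrite expf_neq0.
Qed.

Lemma pder_adjoin_x : pder_adjoin x v.
Proof.
exists 'X, 0; split; [exact: pder_coefX | by rewrite hornerX |].
by rewrite horner0 derivX hornerC mul1r add0r.
Qed.

End Root.
End PartialDerivation.
End PartialDerivations.

Section Derivations.
Variable F : fieldType.
Variable p : nat.
Hypothesis hp : p \in [pchar F].
Local Notation Fp := (@Fp F p).
Implicit Types (G H : F -> F -> Prop) (x y : F).

Definition subrel G H := forall x dx, G x dx -> H x dx.

Lemma pder_directed_union U G0 : pder p G0 -> subrel G0 U ->
  (forall x dx y dy, U x dx -> U y dy ->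
     exists2 H, pder p H & [/\ H x dx, H y dy & subrel H U]) ->
  pder p U.
Proof.
move=> pderG0 G0U dirU; split.
- move=> x dx dx' /dirU/[apply][[H pderH [Hx Hx' _]]]; exact: (pder_fun pderH Hx Hx').
- by move=> y Fy; apply/G0U/(pder_Fp pderG0).
- move=> x dx y dy /dirU/[apply][[H pderH [Hx Hy HU]]]; exact/HU/(pderD pderH).
- move=> x dx y dy /dirU/[apply][[H pderH [Hx Hy HU]]]; exact/HU/(pderM pderH).
split=> x dx Ux; have [H pderH [Hx _ HU]] := dirU _ _ _ _ Ux Ux.
  exact/HU/(pderN pderH).
by have [dy Hy] := pderV pderH Hx; exists dy; apply: HU.
Qed.

Definition extend G1 (S : classical_sets.set (F * F)) x dx := G1 x dx \/ S (x, dx).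

Lemma extend0 G1 : extend G1 (fun _ => False) = G1.
Proof.
apply: boolp.funext => x; apply: boolp.funext => dx.
by apply: boolp.propext; split=> [[]|] //; left.
Qed.

Lemma extend_graph G1 H : subrel G1 H -> extend G1 (fun t => H t.1 t.2) = H.
Proof.
move=> G1H; apply: boolp.funext => x; apply: boolp.funext => dx.
by apply: boolp.propext; split=> [[/G1H|]|] //; right.
Qed.

Lemma pder_extend_chain G1 (Ch : classical_sets.set (classical_sets.set (F * F))) :
  pder p G1 -> (forall S, Ch S -> pder p (extend G1 S)) ->
  classical_sets.total_on Ch classical_sets.subset ->
  pder p (extend G1 (classical_sets.bigcup Ch id)).
Proof.
move=> pderG1 ChP chain; pose Ch0 S := S = (fun _ => False) \/ Ch S.
have pder_Ch0 S : Ch0 S -> pder p (extend G1 S) by case=> [->|/ChP //]; rewrite extend0.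
have chain0 S1 S2 : Ch0 S1 -> Ch0 S2 ->
    (forall t, S1 t -> S2 t) \/ (forall t, S2 t -> S1 t).
  by case=> [->|Ch1] [->|Ch2]; [left | left | right | exact: chain].
have in_Ch0 x dx : extend G1 (classical_sets.bigcup Ch id) x dx ->
    exists2 S, Ch0 S & extend G1 S x dx.
  case=> [G1x|[S ChS Sx]]; first by exists (fun _ => False); left.
  by exists S; right.
apply: (pder_directed_union (G0 := G1)) => // [x dx|x dx y dy]; first by left.
move=> /in_Ch0[S1 Ch1 S1x] /in_Ch0[S2 Ch2 S2y].
wlog S12 : S1 S2 x dx y dy Ch1 Ch2 S1x S2y / forall t, S1 t -> S2 t.
  move=> wlog_S12; case: (chain0 _ _ Ch1 Ch2) => S12; first exact: (wlog_S12 S1 S2).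
  by have [H ? [? ? ?]] := wlog_S12 S2 S1 y dy x dx Ch2 Ch1 S2y S1x S12; exists H.
exists (extend G1 S2); first exact: pder_Ch0.
split=> //; first by case: S1x => [|/S12]; [left | right].
by move=> z dz [G1z|S2z]; [left | right; case: Ch2 S2z => [-> //|]; exists S2].
Qed.

Lemma pder_maximal G1 : pder p G1 ->
  exists2 G, pder p G & subrel G1 G /\ forall x, pdom G x.
Proof.
move=> pderG1; have [A [pderA maxA]] : exists A, pder p (extend G1 A) /\
    forall B, classical_sets.proper A B -> ~ pder p (extend G1 B).
  by apply: classical_sets.Zorn_bigcup => Ch ChP; apply: pder_extend_chain.
exists (extend G1 A) => //; split=> [x dx|x]; first by left.
case: (boolp.EM (pdom (extend G1 A) x)) => // x_notin; exfalso.
pose G' := pder_adjoin (extend G1 A) x 0.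
have AG' : subrel (extend G1 A) G' by move=> z dz; apply: (pder_adjoin_ext hp pderA).
apply: (maxA (fun t => G' t.1 t.2)); last first.
  by rewrite extend_graph; [apply: pder_adjoin_pder | move=> z dz G1z; apply/AG'; left].
split=> [[z dz] Az|/(_ (x, 0) (pder_adjoin_x hp pderA x 0)) Ax]; first by apply/AG'; right.
by apply: x_notin; exists 0; right.
Qed.

Lemma pder_vanishing L : subfield_closed L -> (forall y, Fp y -> L y) ->
  pder p (fun x dx => L x /\ dx = 0).
Proof.
move=> [L0 L1 LD LN [LM LV]] FpL; split.
- by move=> x dx dx' [_ ->] [_ ->].
- by move=> y /FpL.
- by move=> x dx y dy [Lx ->] [Ly ->]; rewrite addr0; split=> //; apply: LD.
- by move=> x dx y dy [Lx ->] [Ly ->]; rewrite !mulr0 addr0; split=> //; apply: LM.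
split; first by move=> x dx [Lx ->]; rewrite oppr0; split=> //; apply: LN.
by move=> x dx [Lx _]; exists 0; split=> //; apply: LV.
Qed.

Lemma exists_derivation L x0 : subfield_closed L -> (forall y, Fp y -> L y) -> ~ L x0 ->
  exists D : F -> F, [/\ forall x y, D (x + y) = D x + D y,
    forall x y, D (x * y) = x * D y + y * D x,
    forall x, L x -> D x = 0 & D x0 = 1].
Proof.
move=> Lsub FpL Lx0; have pderL := pder_vanishing Lsub FpL.
have x0_notin : ~ pdom (fun x dx => L x /\ dx = 0) x0 by case=> ? [].
have [G pderG [G1G /(_ _)/boolp.cid domG]] :=
  pder_maximal (pder_adjoin_pder hp pderL x0_notin 1).
pose D x := sval (domG x); have GD x : G x (D x) := svalP (domG x).
exists D; split=> [x y|x y|x Lx|].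
- exact: (pder_fun pderG (GD _) (pderD pderG (GD x) (GD y))).
- exact: (pder_fun pderG (GD _) (pderM pderG (GD x) (GD y))).
- exact/(pder_fun pderG (GD x))/G1G/(pder_adjoin_ext hp pderL).
- by apply/(pder_fun pderG (GD x0))/G1G; apply: (pder_adjoin_x hp pderL).
Qed.

End Derivations.

(** * Forms killed by the da_l *)

Section Decomposition.
Variable F : fieldType.
Local Notation form := (Form F).
Variables (k : nat) (a : 'I_k -> F) (D : 'I_k -> F -> F).
Hypothesis DD : forall j x y, D j (x + y) = D j x + D j y.
Hypothesis DM : forall j x y, D j (x * y) = x * D j y + y * D j x.
Hypothesis Da : forall i j, D j (a i) = (i == j)%:R.

Definition ord_lt (i j : 'I_k) := (i < j)%N.

Lemma ord_lt_trans : transitive ord_lt. Proof. exact: ltn_trans. Qed.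
Lemma ord_lt_irr : irreflexive ord_lt. Proof. exact: ltnn. Qed.

Local Notation da l := (dw (map a l)).

Definition killed_by (J : seq 'I_k) r (w : form) := forall l : seq 'I_k,
  uniq l -> {subset l <= J} -> size l = r -> Zero (wedge (da l) w).

(* w lies in the sum of the da_I /\ Omega^(n-t), I ranging over t-subsets of J,
   each I listed increasingly. *)
Definition decomposable (J : seq 'I_k) t n (w : form) :=
  exists L : seq (seq 'I_k * form),
    (forall x, x \in L -> [/\ sorted ord_lt x.1, {subset x.1 <= J}, size x.1 = t
                              & homog (n - t) x.2]) /\
    eqv w (\sum_(x <- L) wedge (da x.1) x.2).

Lemma decomposable0 J t n w : Zero w -> decomposable J t n w.
Proof. by move=> Zw; exists [::]; split=> //; rewrite big_nil; apply/eqv0. Qed.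

Lemma decomposable_deg0 J n w : homog n w -> decomposable J 0 n w.
Proof.
move=> hw; exists [:: ([::], w)]; split=> [x|].
  by rewrite inE => /eqP -> /=; rewrite subn0.
by rewrite big_seq1 wedge_nil; apply: eqv_refl.
Qed.

Lemma decomposable_killed0 J t n w : killed_by J 0 w -> decomposable J t n w.
Proof.
move=> kw; apply/decomposable0; rewrite -[w]wedge_nil.
by apply: (kw [::]) => // i; rewrite in_nil.
Qed.

Lemma decomposableD J t n u v :
  decomposable J t n u -> decomposable J t n v -> decomposable J t n (u + v).
Proof.
move=> [Lu [hLu eu]] [Lv [hLv ev]]; exists (Lu ++ Lv).
split; last by rewrite big_cat; apply: eqvD.
by move=> x; rewrite mem_cat => /orP[/hLu|/hLv].
Qed.

Lemma decomposable_cons j J t n u : path ord_lt j J ->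
  decomposable J t n.-1 u -> decomposable (j :: J) t.+1 n (wedge (da [:: j]) u).
Proof.
move=> jJ [L [hL eL]]; exists [seq (j :: x.1, x.2) | x <- L]; split.
  move=> _ /mapP[x /hL[sx Jx tx hx] ->]; split=> //=.
  - case: x.1 sx Jx {tx} => //= i l -> Jx; rewrite andbT.
    by apply: (allP (order_path_min ord_lt_trans jJ)); apply/Jx/mem_head.
  - by move=> i; rewrite !inE => /orP[->|/Jx ->]; rewrite ?orbT.
  - by rewrite tx.
  - by rewrite (_ : n - t.+1 = n.-1 - t)%N // -subn1 -subnDA add1n.
apply: eqv_trans (eqv_wedger _ eL) _; rewrite wedge_sumr big_map.
by apply: eqv_sum => x _; rewrite -wedgeA wedge_dw; apply: eqv_refl.
Qed.

Lemma contract_da j l (w : form) : j \notin l ->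
  wedge (da l) (contract (D j) w) = (-1) ^+ size l *: contract (D j) (wedge (da l) w).
Proof.
move=> jl; rewrite contract_wedge_ker => [|_ /mapP[i il ->]]; last first.
  by rewrite Da; case: eqP => // ij; move: jl; rewrite -ij il.
by rewrite size_map scalerA -expr2 sqrr_sign scale1r.
Qed.

Lemma killed_contract j J r w : j \notin J -> killed_by (j :: J) r w ->
  killed_by J r (contract (D j) w).
Proof.
move=> jJ kw l ul lJ sl; rewrite contract_da; last by apply: contra jJ => /lJ.
apply/zero_scale/(Zero_contract (DD j) (DM j))/kw => //.
by move=> i /lJ iJ; rewrite inE iJ orbT.
Qed.

Lemma killed_contract_wedge j J r w : j \notin J -> killed_by (j :: J) r.+1 w ->
  killed_by J r (contract (D j) (wedge (da [:: j]) w)).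
Proof.
move=> jJ kw l ul lJ sl; rewrite contract_da; last by apply: contra jJ => /lJ.
apply/zero_scale/(Zero_contract (DD j) (DM j)).
rewrite -wedgeA wedge_dw -map_cat; apply: kw; last by rewrite size_cat sl addn1.
- by rewrite cat_uniq ul /= orbF andbT; apply: contra jJ => /lJ.
- by move=> i; rewrite mem_cat inE => /orP[/lJ iJ|/eqP ->]; rewrite inE ?iJ ?eqxx ?orbT.
Qed.

Lemma decomposable_sub J J' t n w : {subset J <= J'} ->
  decomposable J t n w -> decomposable J' t n w.
Proof.
move=> JJ' [L [hL eL]]; exists L; split=> // x /hL[sx Jx tx hx].
by split=> // i /Jx /JJ'.
Qed.

Lemma wedge_contract_split j w :
  w = wedge (da [:: j]) (contract (D j) w) + contract (D j) (wedge (da [:: j]) w).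
Proof. by rewrite /= contract_wedge1 Da eqxx scale1r addrC subrK. Qed.

Lemma decomposition J : sorted ord_lt J -> forall r t n w,
  (r + t = size J + 1)%N -> homog n w -> killed_by J r w -> decomposable J t n w.
Proof.
elim: J => [|j J IH] sJ [|r] [|t] n w //= rt hw kw.
all: try by [exact: decomposable_deg0 | exact: decomposable_killed0].
  by move: rt; rewrite !addnS.
have jJ : j \notin J.
  by apply/negP => /(allP (order_path_min ord_lt_trans sJ)); rewrite /ord_lt ltnn.
have sJ' := path_sorted sJ.
have sub_jJ : {subset J <= j :: J} by move=> i iJ; rewrite inE iJ orbT.
rewrite (wedge_contract_split j w); apply: decomposableD.
  apply: decomposable_cons sJ _.
  apply: (IH sJ' r.+1) => //; [lia | exact: homog_contract |].
  exact: killed_contract.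
apply/(decomposable_sub sub_jJ)/(IH sJ' r) => //; first lia.
  by have := homog_contract (D := D j) (homog_wedge (homog_dw (s := [:: a j])) hw).
exact: killed_contract_wedge.
Qed.

End Decomposition.

Section Sets.
Variable F : fieldType.
Local Notation form := (Form F).
Variables (k : nat) (a : 'I_k -> F).

Lemma sorted_enum_ord : sorted (@ord_lt k) (enum 'I_k).
Proof. by have := iota_ltn_sorted 0 k; rewrite -val_enum_ord sorted_map. Qed.

Lemma sorted_enum_set (I : {set 'I_k}) : sorted (@ord_lt k) (enum I).
Proof. by rewrite /enum_mem -enumT; apply/sorted_filter/sorted_enum_ord/ord_lt_trans. Qed.

Lemma enum_set_sorted (l : seq 'I_k) : sorted (@ord_lt k) l -> enum [set i in l] = l.
Proof.
move=> sl; apply: (irr_sorted_eq (@ord_lt_trans k) (@ord_lt_irr k)) => //.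
  exact: sorted_enum_set.
by move=> i; rewrite mem_enum inE.
Qed.

Lemma sum_sets_wedge (L : seq (seq 'I_k * form)) t :
  (forall x, x \in L -> sorted (@ord_lt k) x.1 /\ size x.1 = t) ->
  \sum_(I : {set 'I_k} | #|I| == t)
     wedge (dw [seq a i | i <- enum I]) (\sum_(x <- L | enum I == x.1) x.2)
  = \sum_(x <- L) wedge (dw (map a x.1)) x.2.
Proof.
elim: L => [|x L IH] hL; first by rewrite big_nil big1 // => I _; rewrite big_nil wedge0r.
have [sx tx] := hL x (mem_head _ _).
rewrite big_cons -IH => [|y yL]; last by apply: hL; rewrite inE yL orbT.
transitivity (\sum_(I : {set 'I_k} | #|I| == t)
   ((if enum I == x.1 then wedge (dw (map a x.1)) x.2 else 0) +
    wedge (dw [seq a i | i <- enum I]) (\sum_(y <- L | enum I == y.1) y.2))).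
  by apply: eq_bigr => I _; rewrite big_cons; case: eqP => [->|_]; rewrite ?wedgeDr ?add0r.
rewrite big_split /=; congr (_ + _).
rewrite (bigD1 [set i in x.1]) /=; last first.
  by rewrite cardsE -tx; apply/eqP/card_uniqP/(sorted_uniq (@ord_lt_trans k) (@ord_lt_irr k)).
rewrite enum_set_sorted // eqxx big1 ?addr0 // => I /andP[_ /negP nI].
case: eqP => // eI; case: nI; apply/eqP/setP => i.
by rewrite -mem_enum eI inE.
Qed.

End Sets.

(** * p-bases *)

Section Adjoin.
Variable F : fieldType.
Variable p : nat.
Implicit Types C : F -> Prop.

Lemma adjoin_subfield C : subfield_closed (adjoin p C).
Proof.
split=> [L [] //|L [] //|x y Cx Cy L LF FpL CL|x Cx L LF FpL CL|].
- by case: (LF) => _ _ LD _ _; apply: LD; [apply: Cx | apply: Cy].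
- by case: (LF) => _ _ _ LN _; apply: LN; apply: Cx.
split=> [x y Cx Cy L|x Cx L] LF FpL CL.
  by case: (LF) => _ _ _ _ [LM _]; apply: LM; [apply: Cx | apply: Cy].
by case: (LF) => _ _ _ _ [_ LV]; apply: LV; apply: Cx.
Qed.

Lemma adjoin_Fp C y : Fp p y -> adjoin p C y.
Proof. by move=> Fy L _ FpL _; apply: FpL. Qed.

Lemma adjoin_gen C c : C c -> adjoin p C c.
Proof. by move=> Cc L _ _ CL; apply: CL. Qed.

Lemma adjoin_eq C (C' : F -> Prop) :
  (forall c, C c -> adjoin p C' c) -> (forall c, C' c -> adjoin p C c) ->
  adjoin p C = adjoin p C'.
Proof.
move=> CC' C'C; apply: boolp.funext => x; apply: boolp.propext.
by split=> Ax; apply: Ax => //; do ?[exact: adjoin_subfield | exact: adjoin_Fp].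
Qed.

Lemma ext_degree_Fp_uniq (L : F -> Prop) d1 d2 : p \in [pchar F] ->
  ext_degree (Fp p) L d1 -> ext_degree (Fp p) L d2 -> d1 = d2.
Proof.
move=> hp; apply: ext_degree_uniq; [exact: Fp0 | exact: Fp1 | exact: FpD | exact: FpN |].
exact: FpM.
Qed.

End Adjoin.

Section PBasis.
Variable F : fieldType.
Local Notation form := (Form F).
Variable p : nat.
Hypothesis hp : p \in [pchar F].
Variables (S : F -> Prop) (k : nat) (a : 'I_k -> F).
Hypothesis hk : pdeg_eq p S k.
Hypothesis ha : p_basis p (adjoin p S) (fun x => exists i, x = a i).
Local Notation A := (fun x => exists i, x = a i).

Lemma adjoin_basis : adjoin p A = adjoin p S.
Proof. by case: ha => _ _ hadj; apply: boolp.funext => x; apply/boolp.propext/hadj. Qed.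

Lemma p_independent_size (s : seq F) : uniq s -> (forall x, x \in s -> A x) ->
  adjoin p (fun x => x \in s) = adjoin p S -> size s = k.
Proof.
case: ha => _ indA _ us sA e; have := indA s us sA; rewrite e => /(ext_degree_Fp_uniq hp hk).
by move/(expnI (prime_gt1 (pcharf_prime hp)))/esym.
Qed.

Lemma basis_inj : injective a.
Proof.
have codomA x : x \in undup (codom a) -> A x by rewrite mem_undup => /codomP[i ->]; exists i.
have adjoin_codom : adjoin p (fun x => x \in undup (codom a)) = adjoin p S.
  rewrite -adjoin_basis; apply: adjoin_eq => [x /codomA|x [i ->]]; apply: adjoin_gen => //.
  by rewrite mem_undup codom_f.
apply/injectiveP; change (uniq (codom a)); apply/negPn.
rewrite -ltn_size_undup (p_independent_size (undup_uniq _) codomA adjoin_codom).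
by rewrite size_codom card_ord ltnn.
Qed.

Lemma basis_notin_others j :
  ~ adjoin p (fun x => x \in [seq a i | i <- enum 'I_k & i != j]) (a j).
Proof.
set sj := [seq a i | i <- _ & _] => Asj.
have usj : uniq sj by rewrite (map_inj_uniq basis_inj) filter_uniq ?enum_uniq.
have sjA x : x \in sj -> A x by case/mapP=> i _ ->; exists i.
have ujsj : uniq (a j :: sj) by rewrite /= usj andbT (mem_map basis_inj) mem_filter eqxx.
have jsjA x : x \in a j :: sj -> A x by rewrite inE => /orP[/eqP ->|/sjA //]; exists j.
have e1 : adjoin p (fun x => x \in a j :: sj) = adjoin p S.
  rewrite -adjoin_basis; apply: adjoin_eq => [x /jsjA|x [i ->]]; apply: adjoin_gen => //.
  have [->|ij] := eqVneq i j; first exact: mem_head.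
  by rewrite inE map_f ?orbT // mem_filter ij mem_enum.
have e2 : adjoin p (fun x => x \in sj) = adjoin p (fun x => x \in a j :: sj).
  apply: adjoin_eq => [x xs|x]; first by apply: adjoin_gen; rewrite inE xs orbT.
  by rewrite inE => /orP[/eqP ->|xs]; [exact: Asj | exact: adjoin_gen].
have := p_independent_size ujsj jsjA e1; rewrite /= (p_independent_size usj sjA (etrans e2 e1)).
by move/esym/n_Sn.
Qed.

Lemma dual_derivations : exists D : 'I_k -> F -> F,
  [/\ forall j x y, D j (x + y) = D j x + D j y,
      forall j x y, D j (x * y) = x * D j y + y * D j x
    & forall i j, D j (a i) = (i == j)%:R].
Proof.
have [D hD] := fin_all_exists (fun j => exists_derivation hp (adjoin_subfield p _)
  (fun y => @adjoin_Fp F p _ y) (basis_notin_others (j := j))).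
exists D; split=> [j|j|i j]; try by case: (hD j).
have [->|ij] := eqVneq i j; first by case: (hD j).
case: (hD j) => _ _ D0 _; apply: D0; apply: adjoin_gen.
by apply: map_f; rewrite mem_filter ij mem_enum.
Qed.

Lemma nuniq_basis u : (forall y, y \in u -> A y) -> (k < size u)%N -> ~~ uniq u.
Proof.
move=> uA ku; apply/negP => uu.
have : (size u <= size (codom a))%N by apply: uniq_leq_size uu _ => y /uA[i ->]; apply: codom_f.
by rewrite size_codom card_ord leqNgt ku.
Qed.

Lemma dw_span_basis u : (forall x, x \in u -> S x) ->
  exists2 css : seq (F * seq F),
    (forall cl, cl \in css -> size cl.2 = size u /\ forall y, y \in cl.2 -> A y) &
    eqv (dw u) (\sum_(cl <- css) cl.1 *: dw cl.2).
Proof.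
by move=> uS; apply: dw_adjoin_span hp _ => x /uS; rewrite adjoin_basis; apply: adjoin_gen.
Qed.

Lemma annihilates_large r w : (k < r)%N -> annihilates S r w.
Proof.
move=> kr s sr sS; have [css Acss ds] := dw_span_basis sS.
apply: Zero_eqv (eqv_wedger w ds) _; rewrite wedge_sumr big_seq.
apply: Zero_sum => cl /Acss[s_cl A_cl]; rewrite wedgeZr.
by apply/zero_scale/Zero_wedger/Zero_dw_nuniq/nuniq_basis; rewrite // s_cl sr.
Qed.

Lemma annihilates_of_decomposition r w (eta : {set 'I_k} -> form) : (r <= k)%N ->
  Zero (w - \sum_(I : {set 'I_k} | #|I| == (k - r + 1)%N)
                wedge (dw [seq a i | i <- enum I]) (eta I)) ->
  annihilates S r w.
Proof.
move=> rk Zw s sr sS; set X := (X in w - X) in Zw; rewrite -[w](subrK X) wedgeDl.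
apply: zero_add; first exact: Zero_wedgel.
rewrite wedge_suml; apply: Zero_sum => I /eqP cI; rewrite wedgeA.
have [css Acss ds] := dw_span_basis sS; apply: Zero_eqv (eqv_wedger _ (eqv_wedger _ ds)) _.
rewrite !wedge_sumr big_seq; apply: Zero_sum => cl /Acss[s_cl A_cl].
rewrite !wedgeZr; apply/zero_scale/Zero_wedge_nuniq_around => z.
have : ~~ uniq ([seq a i | i <- enum I] ++ cl.2).
  apply: nuniq_basis => [y|].
    by rewrite mem_cat => /orP[/mapP[i _ ->]|/A_cl //]; exists i.
  by rewrite size_cat size_map -cardE cI s_cl sr; lia.
by apply: contra => /subseq_uniq; apply; rewrite subseq_cat2l suffix_subseq.
Qed.

Lemma killed_of_annihilates r n w : homog n w -> annihilates S r w ->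
  killed_by a (enum 'I_k) r w.
Proof.
move=> hw ann l _ _ sl; apply/(Zero_wedge_swap _ hw).
have aS x : x \in map a l -> adjoin p S x.
  by case: ha => AS _ _ /mapP[i _ ->]; apply: AS; exists i.
have [css Scss ds] := dw_adjoin_span hp aS.
apply: Zero_eqv (eqv_wedger w ds) _; rewrite wedge_sumr big_seq.
apply: Zero_sum => cl /Scss[s_cl S_cl]; rewrite wedgeZr.
by apply/zero_scale/ann; rewrite // s_cl size_map.
Qed.

Lemma decomposition_of_annihilates r n w : (1 <= r <= k)%N -> homog n w -> annihilates S r w ->
  exists eta : {set 'I_k} -> form,
    (forall I : {set 'I_k}, #|I| = (k - r + 1)%N ->
       OmegaZ (n%:Z - (k - r + 1)%N%:Z) (eta I)) /\
    Zero (w - \sum_(I : {set 'I_k} | #|I| == (k - r + 1)%N)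
                wedge (dw [seq a i | i <- enum I]) (eta I)).
Proof.
move=> /andP[r1 rk] hw ann; set t := (k - r + 1)%N.
have [D [DD DM Da]] := dual_derivations.
have rt : (r + t = size (enum 'I_k) + 1)%N by rewrite size_enum_ord /t; lia.
have [L [hL eL]] :=
  decomposition DD DM Da (sorted_enum_ord k) rt hw (killed_of_annihilates hw ann).
have [tn|nt] := leqP t n.
  exists (fun I : {set 'I_k} => \sum_(x <- L | enum I == x.1) x.2 : form); split.
    by move=> I _; rewrite subzn // big_seq_cond; apply: homog_sum => x /andP[/hL[]].
  by rewrite sum_sets_wedge // => x /hL[].
exists (fun=> 0); split; first by move=> I _; case: (_ - _)%R => //= m; apply: homog0.
rewrite big1 ?subr0 => [|I _]; last by rewrite wedge0r.
apply: Zero_homog_diff hw _ (negbT (ltn_eqF nt)) eL.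
rewrite big_seq; apply: homog_sum => x /hL[_ _ tx hx].
have := homog_wedge (homog_dw (s := map a x.1)) hx.
by rewrite size_map tx (eqP (ltnW nt)) addn0.
Qed.

End PBasis.

Theorem proposition3p5 (F : fieldType) (p : nat) (hp : p \in [pchar F])
  (S : F -> Prop) (hS : exists s, S s) (k : nat) (hk : pdeg_eq p S k)
  (a : 'I_k -> F) (ha : p_basis p (adjoin p S) (fun x => exists i, x = a i))
  (n : nat) :
  (forall r : nat, (1 <= r <= k)%N ->
     forall w : Form F, homog n w ->
       (annihilates S r w <->
        exists eta : {set 'I_k} -> Form F,
          (forall I : {set 'I_k}, #|I| = (k - r + 1)%N ->
             OmegaZ (n%:Z - (k - r + 1)%N%:Z) (eta I)) /\
          Zero (w - \sum_(I : {set 'I_k} | #|I| == (k - r + 1)%N)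
                      wedge (dw [seq a i | i <- enum I]) (eta I))))
  /\
  (forall r : nat, (k < r)%N ->
     forall w : Form F, homog n w -> annihilates S r w).
Proof.
split=> [r rk w hw|r kr w _]; last exact: (annihilates_large hp ha w kr).
split; first exact: (decomposition_of_annihilates hp hk ha rk hw).
by case=> eta [_ Zw]; apply: (annihilates_of_decomposition hp ha _ Zw); case/andP: rk.
Qed.
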